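(* Let $v \ge 360$ be an integer. Then \[ \beta(5,v,4) \le \left\lfloor \frac{5v-15}{3} \right\rfloor, \] and \[ \beta(5,v,4) \ge \begin{cases} \frac{5v-27}{3} & \text{if } v \equiv 0 \pmod 3,\\ \frac{5v-32}{3} & \text{if } v \equiv 1 \pmod 3,\\ \frac{5v-22}{3} & \text{if } v \equiv 2 \pmod 3. \end{cases} \]
   Context: For integers $v \ge k \ge 2$, a $(v,k)$-packing is a pair $(X,\mathcal{B})$ where $X$ is a set of $v$ points and $\mathcal{B}$ is a set of $k$-subsets of $X$ (blocks) such that every pair of distinct points lies in at most one block. A partial parallel class (PPC) is a set of pairwise disjoint blocks; its size is the number of blocks. A PPC of size $\rho$ is maximum if the packing has no PPC of size $\rho+1$. $\beta(\rho,v,k)$ denotes the maximum number of blocks in a $(v,k)$-packing in which the maximum PPC has size $\rho$. *)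

From mathcomp Require Import all_boot.
Set Implicit Arguments. Unset Strict Implicit. Unset Printing Implicit Defensive.

Definition packing (v k : nat) (B : {set {set 'I_v}}) : bool :=
  [forall b in B, #|b| == k] &&
  [forall x : 'I_v, forall y : 'I_v,
     (x != y) ==> (#|[set b in B | (x \in b) && (y \in b)]| <= 1)].

Definition ppc (v : nat) (P : {set {set 'I_v}}) : bool :=
  [forall b1 in P, forall b2 in P, (b1 != b2) ==> [disjoint b1 & b2]].

Definition has_ppc (v : nat) (B : {set {set 'I_v}}) (s : nat) : bool :=
  [exists P : {set {set 'I_v}}, [&& P \subset B, ppc P & #|P| == s]].

Definition max_ppc_size (v : nat) (B : {set {set 'I_v}}) (rho : nat) : bool :=
  has_ppc B rho && ~~ has_ppc B rho.+1.

(* beta(rho,v,k): maximum number of blocks of a (v,k)-packing whose maximum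
   PPC has size rho (0 if no such packing exists). *)
Definition beta (rho v k : nat) : nat :=
  \max_(B : {set {set 'I_v}} | packing k B && max_ppc_size B rho) #|B|.

(* Upper bound: a maximum PPC P of B covers a set S of at most 20 points, and every
   block meets S.  A pendant of x in S is a block meeting S only in x; it has 3 points
   outside S and distinct pendants of x meet only in x, so pendants of points avoided
   by a PPC can be added to it greedily.  As B has no PPC of size 6, the light points
   (fewer than 16 pendants) of a block of P carry at most 15 pendants in all, and heavy
   points leave little room for other blocks.  Counting separately the blocks through
   heavy points (at most (v - 1)/3 per point), the pendants of light points and the
   blocks through two points of S gives 3|B| <= 5v - 15; with at least 5 heavy points
   every block meets them and a double count gives the bound directly.

   Lower bound: on the groups {0..4}, Z_m, Z_m, Z_m take the blocks
   {k, a, a + k, a + 2k} (k < 5, a in Z_m) of a transversal design, plus one block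
   inside {0..4}.  Every block meets {0..4}, so there is no PPC of size 6, while the
   blocks {k, k, 2k, 3k} form one of size 5. *)

From mathcomp Require Import all_boot zify.
Set Implicit Arguments. Unset Strict Implicit. Unset Printing Implicit Defensive.

Section FiniteSets.
Variable T : finType.

Lemma disjointP (A B : {set T}) :
  reflect (forall x, x \in A -> x \in B -> False) [disjoint A & B].
Proof.
apply: (iffP pred0P) => [dAB x xA xB | dAB x /=]; first by have := dAB x; rewrite /= xA xB.
by apply/negP => /andP[/dAB]; apply.
Qed.

Lemma exists_subset_card (A : {set T}) k :
  k <= #|A| -> exists2 X : {set T}, X \subset A & #|X| = k.
Proof.
case/card_geqP => s [us <- sA]; exists [set x in s]; last by rewrite cardsE (card_uniqP us).
by apply/subsetP => x; rewrite inE => /sA.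
Qed.

Variable I : finType.

Lemma leq_card_bigcup (X : {set I}) (F : I -> {set T}) :
  #|\bigcup_(i in X) F i| <= \sum_(i in X) #|F i|.
Proof.
elim/big_rec2: _ => [|i A n _ leAn]; first by rewrite cards0.
by apply: leq_trans (leq_card_setU _ _) _; rewrite leq_add2l.
Qed.

Lemma leq_card_setU3 (A B C : {set T}) : #|A :|: B :|: C| <= #|A| + #|B| + #|C|.
Proof. by rewrite !(leq_trans (leq_card_setU _ _)) // leq_add2r leq_card_setU. Qed.

Lemma leq_sum_card_disjoint (X : {set I}) (F : I -> {set T}) (U : {set T}) :
  {in X &, forall i j, i != j -> [disjoint F i & F j]} ->
  {in X, forall i, F i \subset U} -> \sum_(i in X) #|F i| <= #|U|.
Proof.
elim: {X}_.+1 {-2}X (ltnSn #|X|) U => // n IH X ltXn U dF sFU.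
case: (set_0Vmem X) => [-> | [i iX]]; first by rewrite big_set0.
rewrite (big_setD1 i iX) /=.
have sFUi : {in X :\ i, forall j, F j \subset U :\: F i}.
  by move=> j /setD1P[ji jX]; rewrite subsetD sFU //= dF.
have ltXi : #|X :\ i| < n by rewrite (cardsD1 i X) iX in ltXn.
have dFi : {in X :\ i &, forall j k, j != k -> [disjoint F j & F k]}.
  by move=> j k /setD1P[_ jX] /setD1P[_ kX]; apply: dF.
have := IH _ ltXi _ dFi sFUi; have := cardsID (F i) U.
by rewrite (setIidPr (sFU i iX)); lia.
Qed.

End FiniteSets.

Section Packings.
Variable v : nat.
Implicit Types (B D Q : {set {set 'I_v}}) (c X Y : {set 'I_v}) (x y : 'I_v).

Lemma ppcP Q :
  reflect {in Q &, forall b1 b2 : {set 'I_v}, b1 != b2 -> [disjoint b1 & b2]} (ppc Q).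
Proof.
apply: (iffP forall_inP) => [pQ b1 b2 b1Q b2Q | pQ b1 b1Q].
  by move/forall_inP/(_ b2 b2Q)/implyP: (pQ b1 b1Q).
by apply/forall_inP => b2 b2Q; apply/implyP; apply: pQ.
Qed.

Lemma ppc_trivIset Q : ppc Q = trivIset Q.
Proof. exact/ppcP/trivIsetP. Qed.

Lemma cover_setU1 Q c : cover (c |: Q) = c :|: cover Q.
Proof. by rewrite /cover bigcup_setU big_set1. Qed.

Lemma ppc_setU1 Q c : ppc Q -> c != set0 -> [disjoint c & cover Q] ->
  ppc (c |: Q) /\ #|c |: Q| = #|Q|.+1.
Proof.
move=> pQ /set0Pn[x xc] dcQ; have cQ : c \notin Q.
  by apply: contraL dcQ => cQ; apply/disjointP => /(_ x xc); apply; apply/bigcupP; exists c.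
split; last by rewrite cardsU1 cQ.
by rewrite !ppc_trivIset trivIsetU ?trivIset1 ?cover1 -?ppc_trivIset.
Qed.

Lemma has_ppcP B s :
  reflect (exists2 Q : {set {set 'I_v}}, Q \subset B & ppc Q /\ #|Q| = s) (has_ppc B s).
Proof.
apply: (iffP existsP) => [[Q /and3P[QB pQ /eqP cQ]] | [Q QB [pQ cQ]]]; exists Q => //.
by rewrite QB pQ cQ eqxx.
Qed.

Lemma ppc_card_le Q X :
  ppc Q -> {in Q, forall b, b :&: X != set0} -> #|Q| <= #|X|.
Proof.
move=> /ppcP pQ meetX; rewrite -sum1_card.
apply: leq_trans (leq_sum_card_disjoint (F := fun b => b :&: X) _ _); last first.
- by move=> b _; apply: subsetIr.
- by move=> b1 b2 b1Q b2Q /(pQ _ _ b1Q b2Q); apply: disjointW; apply: subsetIl.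
by apply: leq_sum => b bQ; rewrite card_gt0 meetX.
Qed.

Variables (k : nat) (B : {set {set 'I_v}}).
Hypothesis packB : packing k B.

Lemma packing_card c : c \in B -> #|c| = k.
Proof. by case/andP: packB => /forall_inP cardB _ /cardB/eqP. Qed.

Lemma packing_block_eq c c' x y : c \in B -> c' \in B -> x != y ->
  x \in c -> y \in c -> x \in c' -> y \in c' -> c = c'.
Proof.
case/andP: packB => _ /forallP/(_ x)/forallP/(_ y)/implyP pairB cB c'B /pairB.
by move=> /card_le1_eqP le1 xc yc xc' yc'; apply: le1; rewrite inE ?cB ?c'B ?xc ?yc ?xc' ?yc'.
Qed.

Lemma packing_pair_card X : 1 < #|X| -> #|[set c in B | X \subset c]| <= 1.
Proof.
case/card_gt1P => x [y [xX yX xy]].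
apply/card_le1_eqP => c c' /setIdP[cB /subsetP Xc] /setIdP[c'B /subsetP Xc'].
exact: (packing_block_eq c'B cB xy (Xc' _ xX) (Xc' _ yX) (Xc _ xX) (Xc _ yX)).
Qed.

Definition star x := [set c in B | x \in c].

Lemma sum_card_star_setD x Y : x \in Y ->
  \sum_(c in star x) #|c :\: Y| <= #|~: Y|.
Proof.
move=> xY; apply: leq_sum_card_disjoint => [c c' | c _]; last first.
  by apply/subsetP => p; rewrite !inE => /andP[].
move=> /setIdP[cB xc] /setIdP[c'B xc']; apply: contraR => /pred0Pn[p /=].
rewrite !inE => /andP[/andP[pY pc] /andP[_ pc']].
have px : p != x by apply: contraNneq pY => ->.
by apply/eqP; apply: (packing_block_eq cB c'B px pc xc pc' xc').
Qed.

Lemma packing_star_card x : k.-1 * #|star x| <= v.-1.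
Proof.
have := sum_card_star_setD (set11 x); rewrite cardsC1 card_ord.
rewrite (eq_bigr (fun _ => k.-1)) => [|c /setIdP[cB xc]].
  by rewrite sum_nat_const mulnC.
by rewrite -(packing_card cB) (cardsD1 x c) xc.
Qed.

Lemma packing_card_bigcup_star X :
  k.-1 * #|\bigcup_(x in X) star x| <= #|X| * v.-1.
Proof.
apply: leq_trans (_ : k.-1 * \sum_(x in X) #|star x| <= _).
  by rewrite leq_mul2l leq_card_bigcup orbT.
rewrite big_distrr -sum_nat_const /=; apply: leq_sum => x _; exact: packing_star_card.
Qed.

Lemma packing_card_bigcup_pairs D : {in D, forall X, 1 < #|X|} ->
  #|\bigcup_(X in D) [set c in B | X \subset c]| <= #|D|.
Proof.
move=> D2; apply: leq_trans (leq_card_bigcup _ _) _.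
by rewrite -sum1_card; apply: leq_sum => X /D2; apply: packing_pair_card.
Qed.

Lemma packing_blocks_in_small_set X : #|X| + 2 <= k.*2 ->
  #|[set c in B | c \subset X]| <= 1.
Proof.
move=> smallX; apply/card_le1_eqP => c c' /setIdP[cB cX] /setIdP[c'B c'X].
have : #|c :|: c'| <= #|X| by apply: subset_leq_card; rewrite subUset cX.
have := cardsUI c c'; rewrite (packing_card cB) (packing_card c'B) => cUI leX.
have /card_gt1P[x [y [xcc ycc xy]]] : 1 < #|c :&: c'| by lia.
move: xcc ycc; rewrite !inE => /andP[xc xc'] /andP[yc yc'].
exact: (packing_block_eq c'B cB xy xc' yc' xc yc).
Qed.

End Packings.

Section UpperBound.
Variables (v : nat) (B P : {set {set 'I_v}}).
Implicit Types (Q : {set {set 'I_v}}) (c F H Hs : {set 'I_v}) (x y : 'I_v).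
Hypotheses (packB : packing 4 B) (PB : P \subset B) (ppcP : ppc P) (cardP : #|P| = 5).
Hypothesis noppc6 : ~~ has_ppc B 6.

Definition pendants x := [set c in B | c :&: cover P == [set x]].

Definition heavy := [set x in cover P | 16 <= #|pendants x|].

Lemma ppc_card_neq6 Q : Q \subset B -> ppc Q -> #|Q| <> 6.
Proof. by move=> QB pQ cQ; case/negP: noppc6; apply/has_ppcP; exists Q. Qed.

Lemma card_cover_le20 : #|cover P| <= 20.
Proof.
apply: leq_trans (leq_card_cover P) _.
rewrite (eq_bigr (fun _ => 4)) => [|b bP]; first by rewrite sum_nat_const cardP.
by rewrite (packing_card packB (subsetP PB b bP)).
Qed.

Lemma block_meets_cover c : c \in B -> c :&: cover P != set0.
Proof.
move=> cB; apply/negP => /eqP cS.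
have c0 : c != set0 by rewrite -card_gt0 (packing_card packB cB).
have dcP : [disjoint c & cover P] by rewrite -setI_eq0 cS.
have [pcP cardcP] := ppc_setU1 ppcP c0 dcP.
apply: (ppc_card_neq6 _ pcP); first by rewrite subUset sub1set cB.
by rewrite cardcP cardP.
Qed.

Lemma card_block_setD_cover c : c \in B -> #|c :\: cover P| <= 3.
Proof.
move=> cB; have := block_meets_cover cB; rewrite -card_gt0.
have := cardsID (cover P) c; rewrite (packing_card packB cB); lia.
Qed.

Lemma pendantsP x c : c \in pendants x ->
  [/\ c \in B, c :&: cover P = [set x], x \in c & x \in cover P].
Proof.
rewrite inE => /andP[cB /eqP cS]; have : x \in c :&: cover P by rewrite cS set11.
by rewrite inE => /andP[].
Qed.

Lemma card_pendant_setD_cover x c : c \in pendants x -> #|c :\: cover P| = 3.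
Proof.
case/pendantsP => cB cS _ _; have := cardsID (cover P) c.
by rewrite cS cards1 (packing_card packB cB) => -[].
Qed.

Lemma pendant_avoiding x F : x \notin F -> #|F| < #|pendants x| ->
  exists2 a, a \in pendants x & [disjoint a & F].
Proof.
move=> xF ltF; set bad := \bigcup_(p in F) [set a in pendants x | p \in a].
have : #|bad| <= #|F|.
  apply: leq_trans (leq_card_bigcup _ _) _; rewrite -sum1_card; apply: leq_sum => p pF.
  apply/card_le1_eqP => a a' /setIdP[/pendantsP[aB _ xa _] pa] /setIdP[/pendantsP[a'B _ xa' _] pa'].
  have px : p != x by apply: contraNneq xF => <-.
  exact: (packing_block_eq packB a'B aB px pa' xa' pa xa).
move=> lebad; have /subsetPn[a ax abad] : ~~ (pendants x \subset bad).
  by apply: contraTN ltF => /subset_leq_card; rewrite -leqNgt => /leq_trans; apply.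
exists a => //; apply/disjointP => p pa pF; case/negP: abad.
by apply/bigcupP; exists p; rewrite // inE ax.
Qed.

(* A pendant of h avoiding the [< K] points of [cover Q] outside [cover P] exists
   because each such point lies on at most one pendant of h; adding it to Q puts 3 new
   points outside [cover P]. *)
Lemma ppc_extend_by_pendants K Hs Q :
  Hs \subset cover P -> {in Hs, forall h, K <= #|pendants h|} ->
  Q \subset B -> ppc Q -> [disjoint Hs & cover Q] ->
  #|cover Q :\: cover P| + 3 * #|Hs| <= K + 2 ->
  exists2 Q' : {set {set 'I_v}}, Q' \subset B & ppc Q' /\ #|Q'| = #|Q| + #|Hs|.
Proof.
elim: {Hs}_.+1 {-2}Hs (ltnSn #|Hs|) Q => // n IH Hs ltHn Q HsS KHs QB pQ dHsQ.
case: (set_0Vmem Hs) => [-> | [h hHs]] cQ; first by exists Q; rewrite // cards0 addn0.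
have cardHs : #|Hs| = #|Hs :\ h|.+1 by rewrite (cardsD1 h Hs) hHs.
rewrite cardHs in cQ ltHn *; set F := cover Q :\: cover P in cQ.
have hF : h \notin F by rewrite inE (subsetP HsS h hHs).
have /(pendant_avoiding hF)[a ah aF] : #|F| < #|pendants h|.
  apply: leq_trans (KHs h hHs); rewrite -(leq_add2r 2) (leq_trans _ cQ) //.
  by rewrite addSn -addnS leq_add2l mulnS leq_addr.
have [aB aS ha _] := pendantsP ah.
have aSh p : p \in a -> p \in cover P -> p = h.
  by move=> pa pS; apply/set1P; rewrite -aS inE pa pS.
have daQ : [disjoint a & cover Q].
  apply/disjointP => p pa pcQ; case pS: (p \in cover P).
    by move: (aSh p pa pS) pcQ => ->; rewrite (disjointFr dHsQ hHs).
  by move: (disjointFr aF pa); rewrite inE pcQ pS.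
have a0 : a != set0 by apply/set0Pn; exists h.
have [paQ caQ] := ppc_setU1 pQ a0 daQ.
have daHs : [disjoint Hs :\ h & cover (a |: Q)].
  rewrite cover_setU1; apply/disjointP => p /setD1P[ph pHs] /setUP[pa | pcQ].
    by move: ph; rewrite (aSh p pa (subsetP HsS p pHs)) eqxx.
  by rewrite (disjointFr dHsQ pHs) in pcQ.
have caQS : #|cover (a |: Q) :\: cover P| + 3 * #|Hs :\ h| <= K + 2.
  rewrite cover_setU1 setDUl; apply: leq_trans (leq_add (leq_card_setU _ _) (leqnn _)) _.
  by move: cQ; rewrite (card_pendant_setD_cover ah) mulnS addnCA addnA.
have sHs : Hs :\ h \subset cover P by apply: subset_trans HsS; apply: subD1set.
have KHs' : {in Hs :\ h, forall p, K <= #|pendants p|}.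
  by move=> p /setD1P[_ pHs]; apply: KHs.
have aQB : a |: Q \subset B by rewrite subUset sub1set aB.
have [Q' Q'B [pQ' cQ']] := IH _ ltHn _ sHs KHs' aQB paQ daHs caQS.
by exists Q' => //; rewrite cQ' caQ addSnnS.
Qed.

(* A pendant of y could replace b in P, and a pendant of x would then complete it. *)
Lemma pendants_eq0 b x y : b \in P -> x \in b -> y \in b -> x != y ->
  4 <= #|pendants x| -> pendants y = set0.
Proof.
move=> bP xb yb xy Kx; apply/eqP/set0Pn => -[c cy].
have [cB cS yc _] := pendantsP cy.
have tP : trivIset P by rewrite -ppc_trivIset.
have coverPb : cover (P :\ b) = cover P :\: b := coverD1 tP bP.
have dcPb : [disjoint c & cover (P :\ b)].
  rewrite coverPb; apply/disjointP => p pc /setDP[pS pb].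
  have : p \in c :&: cover P by rewrite inE pc pS.
  by rewrite cS => /set1P pyE; rewrite pyE yb in pb.
have c0 : c != set0 by apply/set0Pn; exists y.
have pPb : ppc (P :\ b) by rewrite ppc_trivIset; apply: trivIsetD.
have [pQ cQ] := ppc_setU1 pPb c0 dcPb.
have xS : x \in cover P by apply/bigcupP; exists b.
have dxQ : [disjoint [set x] & cover (c |: P :\ b)].
  rewrite disjoints1 cover_setU1 coverPb !inE xb xS !andbT orbF.
  apply: contra xy => xc; have : x \in c :&: cover P by rewrite inE xc xS.
  by rewrite cS => /set1P ->.
have cQS : #|cover (c |: P :\ b) :\: cover P| + 3 * #|[set x]| <= 4 + 2.
  rewrite cover_setU1 coverPb setDUl (_ : _ :\: b :\: _ = set0) ?setU0.
    by rewrite (card_pendant_setD_cover cy) cards1.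
  by apply/eqP; rewrite setD_eq0 subsetDl.
have QB : c |: P :\ b \subset B by rewrite subUset sub1set cB (subset_trans (subD1set P b)).
have xS1 : [set x] \subset cover P by rewrite sub1set.
have Kx1 : {in [set x], forall p, 4 <= #|pendants p|} by move=> p /set1P ->.
have [Q' Q'B [pQ' cQ']] := ppc_extend_by_pendants xS1 Kx1 QB pQ dxQ cQS.
apply: (ppc_card_neq6 Q'B pQ'); move: cardP.
by rewrite cQ' cQ cards1 (cardsD1 b P) bP add1n => -[->].
Qed.

Lemma sum_light_pendants b : b \in P ->
  \sum_(x in b | x \notin heavy) #|pendants x| <= 15.
Proof.
move=> bP; have cardb : #|b| = 4 by rewrite (packing_card packB (subsetP PB b bP)).
case: (boolP [exists x in b, 3 < #|pendants x|]) => [/exists_inP[x xb Kx] | small].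
  have others y : y \in b -> y != x -> #|pendants y| = 0.
    by move=> yb yx; rewrite (pendants_eq0 bP xb yb _ Kx) ?cards0 // eq_sym.
  have [xH | xL] := boolP (x \in heavy).
    by rewrite big1 // => y /andP[yb yL]; apply: others yb _; apply: contraNneq yL => ->.
  rewrite (bigD1 x) /= ?xb // big1 => [|y /andP[/andP[yb _]]]; last exact: others.
  have xS : x \in cover P by apply/bigcupP; exists b.
  by move: xL; rewrite inE xS -ltnNge addn0.
apply: leq_trans (_ : \sum_(y in b) 3 <= _); last by rewrite sum_nat_const cardb.
rewrite big_mkcondr; apply: leq_sum => y yb; case: ifP => // _.
by rewrite leqNgt; apply: contra small => Ky; apply/exists_inP; exists y.
Qed.

Lemma ppc_avoiding_heavy_card Q Hs : Hs \subset heavy -> Q \subset B -> ppc Q ->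
  [disjoint Hs & cover Q] -> #|cover Q :\: cover P| + 3 * #|Hs| <= 18 ->
  #|Q| + #|Hs| <> 6.
Proof.
move=> Hsh QB pQ dHsQ cQS.
have HsS : Hs \subset cover P.
  by apply: subset_trans Hsh _; apply/subsetP => x; rewrite inE => /andP[].
have KHs : {in Hs, forall h, 16 <= #|pendants h|}.
  by move=> h /(subsetP Hsh); rewrite inE => /andP[].
have [Q' Q'B [pQ' <-]] := ppc_extend_by_pendants HsS KHs QB pQ dHsQ cQS.
exact: ppc_card_neq6.
Qed.

Lemma block_meets_heavy5 H c : H \subset heavy -> #|H| = 5 -> c \in B ->
  c :&: H != set0.
Proof.
move=> Hh cardH cB; apply/negP => /eqP cH.
have pc : ppc [set c] by rewrite ppc_trivIset trivIset1.
apply: (ppc_avoiding_heavy_card Hh _ pc); rewrite ?cover1 ?cards1 ?cardH //.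
- by rewrite sub1set.
- by rewrite disjoint_sym -setI_eq0 cH.
- exact: leq_trans (leq_add (card_block_setD_cover cB) (leqnn _)) _.
Qed.

Lemma card_blocks_heavy5 H : H \subset heavy -> #|H| = 5 ->
  3 * #|B| <= 5 * (v - 5) + 3.
Proof.
move=> Hh cardH.
have cardB c : c \in B -> #|c :&: H| + #|c :\: H| = 4.
  by move=> cB; rewrite cardsID (packing_card packB cB).
have double_count : \sum_(c in B) #|c :&: H| * #|c :\: H| <= 5 * (v - 5).
  have <- : \sum_(h in H) \sum_(c in star B h) #|c :\: H| =
            \sum_(c in B) #|c :&: H| * #|c :\: H|.
    rewrite (exchange_big_dep (fun c => c \in B)) => [|h c _ /setIdP[]//].
    apply: eq_bigr => c cB; rewrite sum_nat_const; congr (_ * _).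
    by apply: eq_card => h; rewrite unfold_in /= !inE cB andbC.
  have cardCH : #|~: H| = v - 5.
    by have := cardsC H; rewrite cardH card_ord; lia.
  rewrite -cardCH -[5]cardH -sum_nat_const; apply: leq_sum => h hH.
  exact: (sum_card_star_setD packB hH).
have per_block c : c \in B -> 3 <= #|c :&: H| * #|c :\: H| + 3 * (c \subset H).
  move=> cB; have := cardB c cB; have := block_meets_heavy5 Hh cardH cB.
  have -> : (c \subset H) = (#|c :&: H| == 4).
    rewrite -(packing_card packB cB) (subset_leqif_cards (subsetIl c H)).2.
    by apply/idP/eqP => [/setIidPl | <-] //; apply: subsetIr.
  rewrite -card_gt0; case: #|c :&: H| => [|[|[|[|[|s]]]]] // _;
    by rewrite ?addSn ?add0n => -[->].
have in_H : #|[set c in B | c \subset H]| <= 1.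
  by apply: (packing_blocks_in_small_set packB); rewrite cardH.
apply: (@leq_trans (\sum_(c in B) (#|c :&: H| * #|c :\: H| + 3 * (c \subset H)))).
  by rewrite mulnC -sum_nat_const; apply: leq_sum.
rewrite big_split -big_distrr /= leq_add // -[leqRHS]muln1 leq_mul2l /=.
rewrite -sum1dep_card big_mkcondr /= in in_H; apply: leq_trans in_H.
by apply: leq_sum => c _; case: (c \subset H).
Qed.

Lemma pendant_or_pair x c : c \in B -> x \in c -> x \in cover P ->
  c \in pendants x \/ exists2 y, y \in c :&: cover P & y != x.
Proof.
move=> cB xc xS; have [/set0Pn[y /setD1P[yx ycS]] | ] := boolP ((c :&: cover P) :\ x != set0).
  by right; exists y.
rewrite negbK setD_eq0 => cSx; left.
by rewrite inE cB eqEsubset cSx sub1set inE xc xS.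
Qed.

Lemma mem_bigcup_star H c : c \in B -> ~~ [disjoint c & H] ->
  c \in \bigcup_(h in H) star B h.
Proof.
rewrite -setI_eq0 => cB /set0Pn[h /setIP[hc hH]]; apply/bigcupP; exists h => //.
by rewrite inE cB hc.
Qed.

Lemma exists_block_avoiding_heavy : #|heavy| = 4 ->
  exists2 b, b \in P & [disjoint b & heavy].
Proof.
move=> cardH; case: (pickP [pred b | (b \in P) && [disjoint b & heavy]]) => [b /andP[]|none].
  by exists b.
have : #|P| <= #|heavy|.
  by apply: ppc_card_le ppcP _ => b bP; rewrite setI_eq0; move: (none b); rewrite /= bP /= => ->.
by rewrite cardP cardH.
Qed.

Lemma block_avoiding_heavy4_meets b c : #|heavy| = 4 -> b \in P ->
  [disjoint b & heavy] -> c \in B -> [disjoint c & heavy] -> ~~ [disjoint c & b].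
Proof.
move=> cardH bP dbH cB dcH; apply/negP => dcb.
have bS : b \subset cover P by apply/subsetP => p pb; apply/bigcupP; exists b.
have c0 : c != set0 by rewrite -card_gt0 (packing_card packB cB).
have pb : ppc [set b] by rewrite ppc_trivIset trivIset1.
have dcb1 : [disjoint c & cover [set b]] by rewrite cover1.
have [pcb cardcb] := ppc_setU1 pb c0 dcb1.
apply: (ppc_avoiding_heavy_card (subxx heavy) _ pcb); rewrite ?cover_setU1 ?cover1.
- by rewrite subUset !sub1set cB (subsetP PB).
- by rewrite disjoint_sym -setI_eq0 setIUl setU_eq0 !setI_eq0 dcH dbH.
- rewrite setDUl (_ : b :\: cover P = set0) ?setU0 ?cardH; last by apply/eqP; rewrite setD_eq0.
  exact: leq_trans (leq_add (card_block_setD_cover cB) (leqnn _)) _.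
- by rewrite cardcb cards1 cardH.
Qed.

Lemma card_blocks_heavy4 : #|heavy| = 4 -> 3 * #|B| <= 4 * v.-1 + 273.
Proof.
move=> cardH; have [b bP dbH] := exists_block_avoiding_heavy cardH.
have bB : b \in B := subsetP PB b bP.
have bS : b \subset cover P by apply/subsetP => p pb; apply/bigcupP; exists b.
set U1 := \bigcup_(h in heavy) star B h.
set U2 := \bigcup_(x in b) pendants x.
set U3 := \bigcup_(x in b) \bigcup_(y in cover P :\ x) [set c in B | [set x; y] \subset c].
have coverB : B \subset U1 :|: U2 :|: U3.
  apply/subsetP => c cB; have [dcH | mcH] := boolP [disjoint c & heavy]; last first.
    by rewrite !inE mem_bigcup_star.
  have /pred0Pn[x /andP[/= xc xb]] := block_avoiding_heavy4_meets cardH bP dbH cB dcH.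
  have xS := subsetP bS x xb.
  have [cx | [y /setIP[yc yS] yx]] := pendant_or_pair cB xc xS.
    by rewrite !inE; apply/orP; left; apply/orP; right; apply/bigcupP; exists x.
  rewrite !inE; apply/orP; right; apply/bigcupP; exists x => //; apply/bigcupP; exists y.
    by rewrite !inE yx yS.
  by rewrite inE cB subUset !sub1set xc yc.
have cardU1 : 3 * #|U1| <= 4 * v.-1.
  by rewrite -cardH; apply: (packing_card_bigcup_star packB).
have cardU2 : #|U2| <= 15.
  apply: leq_trans (leq_card_bigcup _ _) (leq_trans _ (sum_light_pendants bP)).
  apply/eq_leq/eq_bigl => x /=; case xb: (x \in b) => //.
  by rewrite (disjointFr dbH xb).
have cardU3 : #|U3| <= #|b| * 19.
  apply: leq_trans (leq_card_bigcup _ _) _.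
  rewrite -sum_nat_const; apply: leq_sum => x xb.
  apply: leq_trans (leq_card_bigcup _ _) _.
  apply: leq_trans (_ : \sum_(y in cover P :\ x) 1 <= _).
    by apply: leq_sum => y /setD1P[yx _]; apply: (packing_pair_card packB); rewrite cards2 eq_sym yx.
  rewrite sum1_card; have := card_cover_le20; rewrite (cardsD1 x) (subsetP bS x xb).
  by rewrite add1n ltnS.
rewrite (packing_card packB bB) in cardU3.
have cardB := leq_trans (subset_leq_card coverB) (leq_card_setU3 _ _ _).
apply: leq_trans (leq_mul (leqnn 3) cardB) _.
rewrite !mulnDr -addnA leq_add // (_ : 273 = 3 * 15 + 3 * (4 * 19)) //.
by rewrite leq_add // leq_mul2l ?cardU2 ?cardU3.
Qed.

Lemma card_blocks_light :
  3 * #|B| <= #|heavy| * v.-1 + 225 + 3 * 'C(#|cover P :\: heavy|, 2).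
Proof.
set L := cover P :\: heavy; set D := [set X : {set 'I_v} | X \subset L & #|X| == 2].
set U1 := \bigcup_(h in heavy) star B h.
set U2 := \bigcup_(x in L) pendants x.
set U3 := \bigcup_(X in D) [set c in B | X \subset c].
have coverB : B \subset U1 :|: U2 :|: U3.
  apply/subsetP => c cB; have [dcH | mcH] := boolP [disjoint c & heavy]; last first.
    by rewrite !inE mem_bigcup_star.
  have /set0Pn[x /setIP[xc xS]] := block_meets_cover cB.
  have xL : x \in L by rewrite inE xS (disjointFr dcH xc).
  have [cx | [y /setIP[yc yS] yx]] := pendant_or_pair cB xc xS.
    by rewrite !inE; apply/orP; left; apply/orP; right; apply/bigcupP; exists x.
  rewrite !inE; apply/orP; right; apply/bigcupP; exists [set x; y]; last first.
    by rewrite inE cB subUset !sub1set xc yc.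
  by rewrite inE cards2 subUset !sub1set xL inE yS (disjointFr dcH yc) (eq_sym x y) yx.
have cardU1 : 3 * #|U1| <= #|heavy| * v.-1 := packing_card_bigcup_star packB heavy.
have cardU2 : #|U2| <= 75.
  apply: leq_trans (leq_card_bigcup _ _) _.
  have tP : trivIset P by rewrite -ppc_trivIset.
  rewrite (eq_bigl (fun x => (x \in cover P) && (x \notin heavy))) => [|x]; last first.
    by rewrite /= !inE andbC.
  rewrite (big_trivIset_cond _ tP) /= (_ : 75 = \sum_(b in P) 15).
    by apply: leq_sum => b bP; apply: sum_light_pendants.
  by rewrite sum_nat_const cardP.
have cardU3 : #|U3| <= 'C(#|L|, 2).
  rewrite -cards_draws; apply: (packing_card_bigcup_pairs packB) => X.
  by rewrite inE => /andP[_ /eqP ->].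
have cardB := leq_trans (subset_leq_card coverB) (leq_card_setU3 _ _ _).
apply: leq_trans (leq_mul (leqnn 3) cardB) _.
rewrite !mulnDr leq_add ?leq_add // ?leq_mul2l ?cardU3 //.
by rewrite (_ : 225 = 3 * 75) // leq_mul2l cardU2.
Qed.

End UpperBound.

Lemma light_case_arith h n v : h <= 3 -> h + n <= 20 -> 360 <= v ->
  h * v.-1 + 225 + 3 * 'C(n, 2) <= 5 * v - 15.
Proof.
move=> le3 le20 hv; have : 'C(n, 2) <= 'C(20 - h, 2) by apply: leq_bin2l; lia.
by case: h le3 {le20} => [|[|[|[|]]]] // _; rewrite [X in _ <= X -> _]bin2 /=; lia.
Qed.

Lemma card_packing_max_ppc5 v (B : {set {set 'I_v}}) : 360 <= v ->
  packing 4 B -> max_ppc_size B 5 -> #|B| <= (5 * v - 15) %/ 3.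
Proof.
move=> hv packB /andP[/has_ppcP[P PB [ppcP cardP]] noppc6].
rewrite leq_divRL // mulnC; set H := heavy B P.
have [lt4 | gt4 | eq4] := ltngtP #|H| 4.
- have HS : H \subset cover P by apply/subsetP => x; rewrite inE => /andP[].
  have := cardsID H (cover P); rewrite (setIidPr HS) => cardS.
  have := card_cover_le20 packB PB cardP; rewrite -cardS => le20.
  apply: leq_trans (card_blocks_light packB PB ppcP cardP noppc6) _.
  exact: light_case_arith.
- have [H5 H5H cardH5] := exists_subset_card gt4.
  by have := card_blocks_heavy5 packB PB ppcP cardP noppc6 H5H cardH5; lia.
- by have := card_blocks_heavy4 packB PB ppcP cardP noppc6 eq4; lia.
Qed.

Lemma addn_modn_cases m a n : a < m -> n <= m ->
  a + n = (a + n) %% m \/ a + n = (a + n) %% m + m.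
Proof.
move=> am nm; have : (a + n) %/ m < 2 by rewrite ltn_divLR; lia.
by move: (divn_eq (a + n) m); case: ((a + n) %/ m) => [|[|q]] //; lia.
Qed.

Section Construction.
Variables (v m : nat).
Hypotheses (m_ge13 : 13 <= m) (v_large : 3 * m + 5 <= v).

(* The point of block (k, a) in group j, the groups being {0..4} and three copies of
   Z_m, laid out consecutively. *)
Definition td_point k a j :=
  match j with
  | 0 => k
  | 1 => 5 + a
  | 2 => 5 + m + (a + k) %% m
  | _ => 5 + m.*2 + (a + k.*2) %% m
  end.

Lemma td_point_group k a k' a' i j : k < 5 -> k' < 5 -> a < m -> a' < m ->
  i < 4 -> j < 4 -> td_point k a i = td_point k' a' j -> i = j.
Proof.
move=> k5 k'5 am a'm i4 j4; have m0 : 0 < m by apply: leq_trans m_ge13.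
have := ltn_pmod (a + k) m0; have := ltn_pmod (a + k.*2) m0.
have := ltn_pmod (a' + k') m0; have := ltn_pmod (a' + k'.*2) m0; rewrite /td_point.
move: ((a + k) %% m) ((a + k.*2) %% m) ((a' + k') %% m) ((a' + k'.*2) %% m) => c1 c2 c1' c2'.
by case: i i4 => [|[|[|[|]]]] // _; case: j j4 => [|[|[|[|]]]] // _; lia.
Qed.

Lemma td_point_two_eq k a k' a' i j : k < 5 -> k' < 5 -> a < m -> a' < m ->
  i < 4 -> j < 4 -> i != j ->
  td_point k a i = td_point k' a' i -> td_point k a j = td_point k' a' j -> k = k' /\ a = a'.
Proof.
move=> k5 k'5 am a'm i4 j4 ij; have m0 : 0 < m by apply: leq_trans m_ge13.
have km : k <= m by lia.
have k'm : k' <= m by lia.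
have kkm : k.*2 <= m by lia.
have k'k'm : k'.*2 <= m by lia.
have := addn_modn_cases am km; have := addn_modn_cases a'm k'm.
have := addn_modn_cases am kkm; have := addn_modn_cases a'm k'k'm.
have := ltn_pmod (a + k) m0; have := ltn_pmod (a + k.*2) m0.
have := ltn_pmod (a' + k') m0; have := ltn_pmod (a' + k'.*2) m0; rewrite /td_point.
(* lia does not handle [%% m]: abstract each residue, keeping the two values it can take. *)
move: ((a + k) %% m) ((a + k.*2) %% m) ((a' + k') %% m) ((a' + k'.*2) %% m) => r1 r2 r1' r2'.
by case: i i4 ij => [|[|[|[|]]]] // _; case: j j4 => [|[|[|[|]]]] // _ _; lia.
Qed.

Definition nat_set (s : seq nat) : {set 'I_v} := [set x : 'I_v | val x \in s].

Lemma card_nat_set s : uniq s -> all (fun i => i < v) s -> #|nat_set s| = size s.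
Proof.
elim: s => [|i s IH] /=.
  by move=> _ _; apply/eqP; rewrite cards_eq0; apply/eqP/setP => x; rewrite !inE.
case/andP => nis us /andP[iv sv].
have -> : nat_set (i :: s) = Ordinal iv |: nat_set s.
  by apply/setP => x; rewrite !inE -val_eqE.
by rewrite cardsU1 inE nis IH.
Qed.

Definition td_block k a := nat_set [seq td_point k a j | j <- iota 0 4].

Definition base_block := nat_set (iota 0 4).

Definition td_packing := base_block |: [set td_block p.1 p.2 | p : 'I_5 * 'I_m].

Lemma td_blockP k a x :
  reflect (exists2 j, j < 4 & val x = td_point k a j) (x \in td_block k a).
Proof.
rewrite inE; apply: (iffP mapP) => [[j] | [j]]; rewrite ?mem_iota => j4 xj; exists j => //.
by rewrite mem_iota.
Qed.

Lemma td_point_lt k a j : k < 5 -> a < m -> td_point k a j < v.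
Proof.
move=> k5 am; have m0 : 0 < m by apply: leq_trans m_ge13.
have := ltn_pmod (a + k) m0; have := ltn_pmod (a + k.*2) m0.
by case: j => [|[|[|j]]] /=; lia.
Qed.

Lemma card_td_block k a : k < 5 -> a < m -> #|td_block k a| = 4.
Proof.
move=> k5 am; rewrite card_nat_set ?size_map ?size_iota //.
  rewrite map_inj_in_uniq ?iota_uniq // => i j; rewrite !mem_iota.
  by move=> /andP[_ i4] /andP[_ j4]; apply: td_point_group.
by apply/allP => _ /mapP[j _ ->]; apply: td_point_lt.
Qed.

Lemma td_block_two_points k a k' a' x y : k < 5 -> k' < 5 -> a < m -> a' < m ->
  x != y -> x \in td_block k a -> y \in td_block k a ->
  x \in td_block k' a' -> y \in td_block k' a' -> k = k' /\ a = a'.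
Proof.
move=> k5 k'5 am a'm xy /td_blockP[i i4 xi] /td_blockP[j j4 yj].
move=> /td_blockP[i' i'4 xi'] /td_blockP[j' j'4 yj'].
have ii' := td_point_group k5 k'5 am a'm i4 i'4 (etrans (esym xi) xi').
have jj' := td_point_group k5 k'5 am a'm j4 j'4 (etrans (esym yj) yj').
subst i' j'; have ij : i != j by apply: contra xy => /eqP ij; rewrite -val_eqE /= xi yj ij.
by apply: (td_point_two_eq k5 k'5 am a'm i4 j4 ij); rewrite -?xi -?yj.
Qed.

Lemma td_block_inj k a k' a' : k < 5 -> k' < 5 -> a < m -> a' < m ->
  td_block k a = td_block k' a' -> k = k' /\ a = a'.
Proof.
move=> k5 k'5 am a'm eqb.
pose x := Ordinal (@td_point_lt k a 0 k5 am); pose y := Ordinal (@td_point_lt k a 1 k5 am).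
have xb : x \in td_block k a by apply/td_blockP; exists 0.
have yb : y \in td_block k a by apply/td_blockP; exists 1.
apply: (td_block_two_points k5 k'5 am a'm _ xb yb); rewrite -?eqb //.
by rewrite -val_eqE /=; lia.
Qed.

Lemma base_block_td_block x k a : x \in base_block -> x \in td_block k a -> val x = k.
Proof.
rewrite inE mem_iota => x4 /td_blockP[j _ xj]; move: x4; rewrite xj.
by case: j {xj} => [|[|[|j]]] //=; lia.
Qed.

Lemma td_packingP b : b \in td_packing ->
  b = base_block \/ exists k a, [/\ k < 5, a < m & b = td_block k a].
Proof.
case/setU1P => [-> | /imsetP[[k a] _ ->]]; first by left.
by right; exists k, a.
Qed.

Lemma card_base_block : #|base_block| = 4.
Proof. by rewrite card_nat_set ?iota_uniq //; apply/allP => i; rewrite mem_iota; lia. Qed.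

Lemma packing_td_packing : packing 4 td_packing.
Proof.
apply/andP; split.
  apply/forall_inP => b /td_packingP[-> | [k [a [k5 am ->]]]].
    by rewrite card_base_block.
  by rewrite card_td_block.
apply/forallP => x; apply/forallP => y; apply/implyP => xy.
have base_td k a : x \in base_block -> y \in base_block ->
    x \in td_block k a -> y \in td_block k a -> False.
  move=> xb yb /(base_block_td_block xb) ex /(base_block_td_block yb) ey.
  by move/eqP: xy; apply; apply: val_inj; rewrite ex ey.
apply/card_le1_eqP => b b' /setIdP[bB /andP[xb yb]] /setIdP[b'B /andP[xb' yb']].
case: (td_packingP bB) => [eb | [k [a [k5 am eb]]]];
  case: (td_packingP b'B) => [eb' | [k' [a' [k'5 a'm eb']]]]; subst b b' => //.
- by case: (base_td k' a' xb yb xb' yb').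
- by case: (base_td k a xb' yb' xb yb).
by have [-> ->] := td_block_two_points k'5 k5 a'm am xy xb' yb' xb yb.
Qed.

Lemma card_td_packing : #|td_packing| = 1 + 5 * m.
Proof.
have v1 : 1 < v by lia.
have notbase : base_block \notin [set td_block p.1 p.2 | p : 'I_5 * 'I_m].
  apply/imsetP => -[[k a] _ /= eqb].
  have x0b : Ordinal (ltnW v1) \in base_block by rewrite inE mem_iota.
  have x1b : Ordinal v1 \in base_block by rewrite inE mem_iota.
  have ek x : x \in base_block -> val x = k.
    by move=> xb; apply: (base_block_td_block (a := a) xb); rewrite -eqb.
  by have := ek _ x0b; rewrite -(ek _ x1b).
rewrite cardsU1 notbase card_imset ?card_prod ?card_ord // => -[k a] [k' a'] /= eqb.
have [ekk eaa] := td_block_inj (ltn_ord k) (ltn_ord k') (ltn_ord a) (ltn_ord a') eqb.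
by congr (_, _); apply: val_inj.
Qed.

Lemma td_point_diag_inj k k' i : k < 5 -> k' < 5 -> td_point k k i = td_point k' k' i -> k = k'.
Proof. by move=> k5 k'5; case: i => [|[|[|i]]] /=; rewrite ?modn_small; lia. Qed.

Lemma td_packing_has_ppc5 : has_ppc td_packing 5.
Proof.
have km (k : 'I_5) : k < m by apply: leq_trans (ltn_ord k) (leq_trans _ m_ge13).
have kk_inj (k k' : 'I_5) : td_block k k = td_block k' k' -> k = k'.
  by move/(td_block_inj (ltn_ord k) (ltn_ord k') (km k) (km k')) => [/val_inj].
apply/has_ppcP; exists [set td_block k k | k : 'I_5].
  apply/subsetP => _ /imsetP[k _ ->]; apply/setU1P; right.
  by apply/imsetP; exists (k, Ordinal (km k)).
split; last by rewrite card_imset ?card_ord // => k k'; apply: kk_inj.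
apply/ppcP => _ _ /imsetP[k _ ->] /imsetP[k' _ ->] kk'; apply/disjointP => x.
move=> /td_blockP[i i4 xi] /td_blockP[i' i'4 xi']; case/eqP: kk'.
have eqi : td_point k k i = td_point k' k' i' by rewrite -xi -xi'.
have ii' := td_point_group (ltn_ord k) (ltn_ord k') (km k) (km k') i4 i'4 eqi; subst i'.
by rewrite (val_inj (td_point_diag_inj (ltn_ord k) (ltn_ord k') eqi)).
Qed.

Lemma td_packing_no_ppc6 : ~~ has_ppc td_packing 6.
Proof.
apply/has_ppcP => -[Q QB [pQ cardQ]].
have lt5v k : k < 5 -> k < v by lia.
suff : #|Q| <= 5 by rewrite cardQ.
have v5 : all (fun i => i < v) (iota 0 5) by apply/allP => i; rewrite mem_iota => /lt5v.
rewrite -(size_iota 0 5) -card_nat_set ?iota_uniq //.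
apply: ppc_card_le pQ _ => b /(subsetP QB) /td_packingP[-> | [k [a [k5 am ->]]]]; apply/set0Pn.
  by exists (Ordinal (lt5v 0 isT)); rewrite !inE.
exists (Ordinal (lt5v k k5)); apply/setIP; split; last by rewrite inE mem_iota.
by apply/td_blockP; exists 0.
Qed.

End Construction.

Lemma beta_5_4_ge v : 44 <= v -> 1 + 5 * ((v - 5) %/ 3) <= beta 5 v 4.
Proof.
move=> hv; have m13 : 13 <= (v - 5) %/ 3 by lia.
have mv : 3 * ((v - 5) %/ 3) + 5 <= v by lia.
rewrite -(card_td_packing m13 mv); apply: leq_bigmax_cond.
by rewrite packing_td_packing // /max_ppc_size td_packing_has_ppc5 // td_packing_no_ppc6.
Qed.

Lemma beta_5_4_le v : 360 <= v -> beta 5 v 4 <= (5 * v - 15) %/ 3.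
Proof.
by move=> hv; apply/bigmax_leqP => B /andP[packB maxB]; apply: card_packing_max_ppc5.
Qed.

(* The divisions in the lower bounds are exact in each residue class. *)
Theorem theorem4p5 (v : nat) (hv : 360 <= v) :
  beta 5 v 4 <= (5 * v - 15) %/ 3 /\
  (v %% 3 = 0 -> (5 * v - 27) %/ 3 <= beta 5 v 4) /\
  (v %% 3 = 1 -> (5 * v - 32) %/ 3 <= beta 5 v 4) /\
  (v %% 3 = 2 -> (5 * v - 22) %/ 3 <= beta 5 v 4).
Proof.
have lower := beta_5_4_ge (leq_trans (isT : 44 <= 360) hv).
split; first exact: beta_5_4_le.
by split; [|split] => vmod3; apply: leq_trans lower; lia.
Qed.
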